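(* Let $t$ be a random permutation of $\{0,\dots,N-1\}$ with an arbitrary distribution that is not $\delta$ non-uniform, and let $S$ be a part of maximum size among those satisfying $\Pr[S\subseteq\mathrm{parts}(t)]>2^{\delta|S|}\,(N-|S|)!/N!$. Then for every part $S'$ distinct from $S$, $$\Pr[S'\subseteq\mathrm{parts}(t)\mid S\subseteq\mathrm{parts}(t)]\le2^{\delta|S'|}\frac{(N-|S|-|S'|)!}{(N-|S|)!}.$$
   Context: A part is a set $S=\{(x_i,y_i)\}_{i=1}^M$ such that some permutation $\pi$ of $\{0,\dots,N-1\}$ has $\pi(x_i)=y_i$ for all $i$; ''$S\subseteq\mathrm{parts}(t)$'' means $t(x_i)=y_i$ for all $i$. Parts $S,S'$ are distinct if they share no input and $S\cup S'$ is a part. A random permutation $t$ is $\delta$ non-uniform if $\Pr[S\subseteq\mathrm{parts}(t)]\le2^{\delta|S|}(N-|S|)!/N!$ for every part $S$ (the right-hand factor being the probability for a uniformly random permutation). *)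

From mathcomp Require Import all_boot all_order all_algebra all_fingroup.
From mathcomp Require Import reals exp.
Set Implicit Arguments. Unset Strict Implicit. Unset Printing Implicit Defensive.
Import Order.TTheory GRing.Theory Num.Theory.
Local Open Scope ring_scope.

Definition is_part (N : nat) (S : {set 'I_N * 'I_N}) : Prop :=
  exists pi : {perm 'I_N}, forall p, p \in S -> pi p.1 = p.2.

Definition in_parts (N : nat) (S : {set 'I_N * 'I_N}) (s : {perm 'I_N}) : bool :=
  [forall p in S, s p.1 == p.2].

Definition is_distr (R : realType) (N : nat) (P : {ffun {perm 'I_N} -> R}) : Prop :=
  (forall s, 0 <= P s) /\ \sum_s P s = 1.

Definition prob_parts (R : realType) (N : nat) (P : {ffun {perm 'I_N} -> R})
  (S : {set 'I_N * 'I_N}) : R :=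
  \sum_(s | in_parts S s) P s.

Definition prob_parts2 (R : realType) (N : nat) (P : {ffun {perm 'I_N} -> R})
  (S' S : {set 'I_N * 'I_N}) : R :=
  \sum_(s | in_parts S' s && in_parts S s) P s.

Definition cond_prob_parts (R : realType) (N : nat) (P : {ffun {perm 'I_N} -> R})
  (S' S : {set 'I_N * 'I_N}) : R :=
  prob_parts2 P S' S / prob_parts P S.

Definition nu_bound (R : realType) (N : nat) (delta : R) (S : {set 'I_N * 'I_N}) : R :=
  (2 `^ (delta * #|S|%:R)) * ((N - #|S|)`!)%:R / (N`!)%:R.

Definition nonuniform (R : realType) (N : nat) (delta : R)
  (P : {ffun {perm 'I_N} -> R}) : Prop :=
  forall S : {set 'I_N * 'I_N}, is_part S -> prob_parts P S <= nu_bound delta S.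

Definition distinct_parts (N : nat) (S S' : {set 'I_N * 'I_N}) : Prop :=
  (forall p q, p \in S -> q \in S' -> p.1 != q.1) /\ is_part (S :|: S').

(* Conditioning on S turns Pr[S' | S] into Pr[S u S'] / Pr[S].  For nonempty
   S', the part S u S' is strictly larger than S, so maximality of S forces
   Pr[S u S'] <= nu(S u S'), while Pr[S] > nu(S); the quotient
   nu(S u S') / nu(S) is exactly the claimed bound.  For S' empty both sides
   equal 1. *)
From mathcomp Require Import all_boot all_order all_algebra all_fingroup.
From mathcomp Require Import reals exp.
From mathcomp Require Import ring.
Import Order.TTheory GRing.Theory Num.Theory.
Local Open Scope ring_scope.

Lemma in_partsU {N : nat} (S S' : {set 'I_N * 'I_N}) (s : {perm 'I_N}) :
  in_parts (S :|: S') s = in_parts S s && in_parts S' s.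
Proof.
apply/forallP/andP => [H|[/forallP HS /forallP HS']].
  by split; apply/forallP => p; apply/implyP => hp;
    apply: (implyP (H p)); rewrite in_setU hp ?orbT.
move=> p; apply/implyP; rewrite in_setU => /orP [pS|pS'].
  exact: (implyP (HS p)).
exact: (implyP (HS' p)).
Qed.

Lemma prob_parts2_setU {R : realType} {N : nat} (P : {ffun {perm 'I_N} -> R})
    (S' S : {set 'I_N * 'I_N}) :
  prob_parts2 P S' S = prob_parts P (S :|: S').
Proof. by apply: eq_bigl => s; rewrite in_partsU andbC. Qed.

Lemma distinct_parts_disjoint {N : nat} {S S' : {set 'I_N * 'I_N}} :
  distinct_parts S S' -> [disjoint S & S'].
Proof.
move=> [Hdis _]; apply/pred0P => p /=; apply/negbTE/negP => /andP [pS pS'].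
by move: (Hdis _ _ pS pS'); rewrite eqxx.
Qed.

Lemma card_distinct_partsU {N : nat} {S S' : {set 'I_N * 'I_N}} :
  distinct_parts S S' -> #|S :|: S'| = (#|S| + #|S'|)%N.
Proof.
move=> HSS'.
by rewrite cardsU (disjoint_setI0 (distinct_parts_disjoint HSS')) cards0 subn0.
Qed.

Lemma nu_bound_gt0 {R : realType} {N : nat} (delta : R) (S : {set 'I_N * 'I_N}) :
  0 < nu_bound delta S.
Proof. by rewrite /nu_bound divr_gt0 ?mulr_gt0 ?powR_gt0 // ltr0n fact_gt0. Qed.

Lemma nu_bound_ratio {R : realType} {N : nat} (delta : R)
    {S T : {set 'I_N * 'I_N}} {k : nat} :
  #|T| = (#|S| + k)%N ->
  nu_bound delta T / nu_bound delta S =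
  2 `^ (delta * k%:R) * ((N - #|S| - k)`!)%:R / ((N - #|S|)`!)%:R.
Proof.
move=> cardT; rewrite /nu_bound cardT natrD mulrDr powRD ?pnatr_eq0 ?implybT //.
rewrite subnDA.
have fact_neq0 n : (n`!)%:R != 0 :> R by rewrite pnatr_eq0 -lt0n fact_gt0.
have pow_neq0 : 2 `^ (delta * #|S|%:R) != 0 :> R by rewrite gt_eqF ?powR_gt0.
by field; rewrite !fact_neq0 pow_neq0.
Qed.

Lemma ler_div_bounds {R : numFieldType} {x y a b : R} :
  0 < b -> b < y -> 0 <= x -> x <= a -> x / y <= a / b.
Proof.
move=> b_gt0 lt_by x_ge0 le_xa.
have y_gt0 : 0 < y := lt_trans b_gt0 lt_by.
apply: (le_trans (y := a / y)); first by rewrite ler_pM2r ?invr_gt0.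
by rewrite ler_wpM2l ?(le_trans x_ge0) // lef_pV2 ?posrE // ltW.
Qed.

Lemma prob_parts_setU_le {R : realType} {N : nat} (delta : R)
    (P : {ffun {perm 'I_N} -> R}) (S S' : {set 'I_N * 'I_N}) :
  (forall S2 : {set 'I_N * 'I_N}, is_part S2 ->
     nu_bound delta S2 < prob_parts P S2 -> (#|S2| <= #|S|)%N) ->
  distinct_parts S S' -> S' != set0 ->
  prob_parts P (S :|: S') <= nu_bound delta (S :|: S').
Proof.
move=> Smax HSS' S'_neq0; rewrite leNgt; apply/negP => /(Smax _ (proj2 HSS')).
rewrite (card_distinct_partsU HSS') -{2}(addn0 #|S|) leq_add2l leqn0.
by rewrite cards_eq0 (negbTE S'_neq0).
Qed.

Theorem mainTheorem8 (R : realType) (N : nat) (delta : R)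
  (P : {ffun {perm 'I_N} -> R}) (S : {set 'I_N * 'I_N}) :
  is_distr P ->
  ~ nonuniform delta P ->
  is_part S ->
  nu_bound delta S < prob_parts P S ->
  (forall S2 : {set 'I_N * 'I_N}, is_part S2 ->
     nu_bound delta S2 < prob_parts P S2 -> (#|S2| <= #|S|)%N) ->
  forall S' : {set 'I_N * 'I_N}, is_part S' -> distinct_parts S S' ->
    cond_prob_parts P S' S <=
    2 `^ (delta * #|S'|%:R) * ((N - #|S| - #|S'|)`!)%:R / ((N - #|S|)`!)%:R.
Proof.
move=> [P_ge0 _] _ _ S_heavy Smax S' _ HSS'.
rewrite /cond_prob_parts prob_parts2_setU.
rewrite -(nu_bound_ratio delta (card_distinct_partsU HSS')).
have pS_gt0 : 0 < prob_parts P S := lt_trans (nu_bound_gt0 _ _) S_heavy.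
have [->|S'_neq0] := eqVneq S' set0.
  by rewrite setU0 !divff ?gt_eqF ?nu_bound_gt0.
apply: (ler_div_bounds (nu_bound_gt0 _ _) S_heavy).
  by rewrite /prob_parts sumr_ge0.
exact: prob_parts_setU_le.
Qed.
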